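(* Let $F[n,x]$ be a formula of ZF$\varepsilon$ with parameters, and let $G,U\in\Lambda$ satisfy $G\Vdash\forall n\,\neg\forall x\,\neg F[n,x]$ and $U\Vdash\forall f\,\neg\forall n^{\mathbb N}F[n,f[n]]$. Put $H=\Psi GU$. Let $k\in\mathbb N$ and $\phi\in\Lambda$ be such that for every $i<k$ there is a set $a_i$ with $\phi\underline i\Vdash F[i,a_i]$. If $H\underline k\,\phi\not\Vdash\bot$, then there exist a set $a_k$ and a term $\zeta_{k,\phi}\in\Lambda$ such that $\zeta_{k,\phi}\Vdash F[k,a_k]$ and $(H\underline k^+)(\chi)\underline k\,\phi\,\zeta_{k,\phi}\not\Vdash\bot$, where $\underline k^+=(\sigma)\underline k$.
   Context: Fix an integer $N\ge 0$. The set $\Lambda$ of terms is the smallest set containing the constants $B,C,I,K,W,cc,A$ and $p,q_0,\dots,q_N$, closed under application $(\xi)\eta$ (written $\xi\eta$), and containing, for each sequence $(\xi_i)_{i\in\mathbb N}$ of closed terms (no occurrence of $p,q_0,\dots,q_N$), a constant $\bigwedge_i\xi_i$ (injectively, well-founded). Stacks: finite sequences $t_0\cdot\ldots\cdot t_{n-1}\cdot\pi_0$ of terms, $\pi_0$ the empty stack; $\Pi$ the set of stacks. $\ell_t=((C)(B)CB)t$, $k_{\pi_0}=A$, $k_{t\cdot\pi}=(\ell_t)k_\pi$; $\sigma=(BW)(C)(B)BB$, $\underline0=(K)I$, $\underline{n+1}=(\sigma)\underline n$. Execution $\succ$: least preorder on $\Lambda\times\Pi$ with $(\xi)\eta\star\pi\succ\xi\star\eta\cdot\pi$;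 $B\star\xi\cdot\eta\cdot\zeta\cdot\pi\succ\xi\star(\eta)\zeta\cdot\pi$; $C\star\xi\cdot\eta\cdot\zeta\cdot\pi\succ\xi\star\zeta\cdot\eta\cdot\pi$; $I\star\xi\cdot\pi\succ\xi\star\pi$; $K\star\xi\cdot\eta\cdot\pi\succ\xi\star\pi$; $W\star\xi\cdot\eta\cdot\pi\succ\xi\star\eta\cdot\eta\cdot\pi$; $cc\star\xi\cdot\pi\succ\xi\star k_\pi\cdot\pi$; $A\star\xi\cdot\pi\succ\xi\star\pi_0$; $\bigwedge_i\xi_i\star\underline n\cdot\pi\succ\xi_n\star\pi$. Pole $\perp\!\!\!\perp=\{\xi\star\pi:\exists\varpi,\ \xi\star\pi\succ p\star\varpi\}$. $\lambda$-terms are translated into terms by the usual combinatory translation. Let $\mathbf0=\lambda x\lambda y\,y$, $\mathbf1=\lambda x\lambda y\,x$, $\mathsf a=\lambda x\lambda y\,yx$, $(i<k)=((k\mathsf a)\lambda d\,\mathbf0)(i\mathsf a)\lambda d\,\mathbf1$, $\chi=\lambda k\lambda f\lambda z\lambda i((i<k)(f)i)z$, $k^+=(\sigma)k$, $X=\lambda x\lambda f(f)(x)xf$, $Y=XX$, $\Psi=\lambda g\lambda u(Y)\lambda h\lambda k\lambda f(u)(\chi kf)(g)\lambda z(hk^+)(\chi)kfz$. Realizability is Krivine's classical realizability for ZF$\varepsilon$ over a ground model of ZF: $\xi\Vdash F$ iff $\xi\star\pi\in\perp\!\!\!\perp$ for all $\pi\in\|F\|$; $\|\bot\|=\Pi$,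 $\|A\to B\|=\{\eta\cdot\pi:\eta\Vdash A,\pi\in\|B\|\}$, $\|\forall xF[x]\|=\bigcup_a\|F[a]\|$, $\neg A$ is $A\to\bot$, $\|\forall n^{\mathbb N}F[n]\|=\{\underline n\cdot\pi:n\in\mathbb N,\pi\in\|F[n]\|\}$; $\xi\not\Vdash F$ means $\xi\Vdash F$ fails. $f[n]=\mathrm{app}(f,n)=\{y:(n,y)\in f\}$. *)

From Stdlib Require Import Arith List Relations.
Import ListNotations.

Inductive term : Type :=
| tB | tC | tI | tK | tW | tcc | tA
| tp
| tq (j : nat)            (* q_j, only j <= N is legal, see [valid] *)
| tapp (t u : term)
| tbig (f : nat -> term). (* /\_i f i *)

Fixpoint noparam (t : term) : Prop :=
  match t with
  | tp => False
  | tq _ => False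
  | tapp t u => noparam t /\ noparam u
  | tbig f => forall i, noparam (f i)
  | _ => True
  end.

(** membership in Lambda (for the fixed N) *)
Fixpoint valid (N : nat) (t : term) : Prop :=
  match t with
  | tq j => j <= N
  | tapp t u => valid N t /\ valid N u
  | tbig f => forall i, valid N (f i) /\ noparam (f i)
  | _ => True
  end.

Definition stack := list term.
Definition validstack (N : nat) (pi : stack) : Prop := Forall (valid N) pi.

Definition sigma : term := tapp (tapp tB tW) (tapp tC (tapp (tapp tB tB) tB)).
Fixpoint num (n : nat) : term :=
  match n with
  | O => tapp tK tI
  | S n => tapp sigma (num n)
  end.
Definition ell (t : term) : term := tapp (tapp tC (tapp (tapp tB tC) tB)) t.
Fixpoint kont (pi : stack) : term :=
  match pi with
  | [] => tA
  | t :: pi => tapp (ell t) (kont pi)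
  end.

Inductive step : term * stack -> term * stack -> Prop :=
| s_push t u pi : step (tapp t u, pi) (t, u :: pi)
| s_B x y z pi : step (tB, x :: y :: z :: pi) (x, tapp y z :: pi)
| s_C x y z pi : step (tC, x :: y :: z :: pi) (x, z :: y :: pi)
| s_I x pi : step (tI, x :: pi) (x, pi)
| s_K x y pi : step (tK, x :: y :: pi) (x, pi)
| s_W x y pi : step (tW, x :: y :: pi) (x, y :: y :: pi)
| s_cc x pi : step (tcc, x :: pi) (x, kont pi :: pi)
| s_A x pi : step (tA, x :: pi) (x, [])
| s_big f n pi : step (tbig f, num n :: pi) (f n, pi).

Definition exec : term * stack -> term * stack -> Prop := clos_refl_trans _ step.

Definition pole (xi : term) (pi : stack) : Prop :=
  exists varpi, exec (xi, pi) (tp, varpi).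

Definition fval := stack -> Prop.

(** xi ||- F ; only genuine stacks (elements of Pi) are tested *)
Definition realizes (N : nat) (xi : term) (A : fval) : Prop :=
  forall pi, validstack N pi -> A pi -> pole xi pi.

Definition bot (N : nat) : fval := fun pi => validstack N pi.

Definition arrow (N : nat) (A B : fval) : fval :=
  fun pi => exists eta pi', pi = eta :: pi' /\ valid N eta /\ realizes N eta A /\ B pi'.

Definition neg (N : nat) (A : fval) : fval := arrow N A (bot N).

Definition forallV {V : Type} (P : V -> fval) : fval :=
  fun pi => exists a, P a pi.

Definition forallN (P : nat -> fval) : fval :=
  fun pi => exists n pi', pi = num n :: pi' /\ P n pi'.

Inductive lam : Type :=
| LV (x : nat) | LA (t u : lam) | LL (x : nat) (t : lam) | LC (c : term).

Inductive cterm : Type :=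
| CV (x : nat) | CK (c : term) | CAp (t u : cterm).

Fixpoint occurs (x : nat) (c : cterm) : bool :=
  match c with
  | CV y => Nat.eqb x y
  | CK _ => false
  | CAp t u => occurs x t || occurs x u
  end.

(* S = B (B W) (B B C) :  S * a.b.c.pi  >-  a * c.(b)c.pi *)
Definition Scomb : term := tapp (tapp tB (tapp tB tW)) (tapp (tapp tB tB) tC).

Fixpoint abs (x : nat) (c : cterm) : cterm :=
  if occurs x c then
    match c with
    | CV _ => CK tI
    | CK _ => CAp (CK tK) c
    | CAp t u =>
        if occurs x t then
          if occurs x u then CAp (CAp (CK Scomb) (abs x t)) (abs x u)
          else CAp (CAp (CK tC) (abs x t)) u
        else CAp (CAp (CK tB) t) (abs x u)
    end
  else CAp (CK tK) c.

Fixpoint tr (t : lam) : cterm :=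
  match t with
  | LV x => CV x
  | LA t u => CAp (tr t) (tr u)
  | LL x t => abs x (tr t)
  | LC c => CK c
  end.

Fixpoint close (c : cterm) : term :=
  match c with
  | CV _ => tI (* never reached for closed lambda-terms *)
  | CK c => c
  | CAp t u => tapp (close t) (close u)
  end.

Definition lam2term (t : lam) : term := close (tr t).

Definition vx := 0. Definition vy := 1. Definition vd := 2.
Definition vk := 3. Definition vf := 4. Definition vz := 5. Definition vi := 6.
Definition vh := 7. Definition vg := 8. Definition vu := 9.
Definition vX := 10. Definition vF := 11.

Definition zeroL : lam := LL vx (LL vy (LV vy)).
Definition oneL : lam := LL vx (LL vy (LV vx)).
Definition aL : lam := LL vx (LL vy (LA (LV vy) (LV vx))).

Definition ltL (i k : lam) : lam :=
  LA (LA (LA k aL) (LL vd zeroL)) (LA (LA i aL) (LL vd oneL)).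

Definition chiL : lam :=
  LL vk (LL vf (LL vz (LL vi
    (LA (LA (ltL (LV vi) (LV vk)) (LA (LV vf) (LV vi))) (LV vz))))).
Definition chi : term := lam2term chiL.

Definition XL : lam := LL vX (LL vF (LA (LV vF) (LA (LA (LV vX) (LV vX)) (LV vF)))).
Definition YL : lam := LA XL XL.

Definition PsiL : lam :=
  LL vg (LL vu (LA YL (LL vh (LL vk (LL vf
    (LA (LV vu)
      (LA (LA (LA (LC chi) (LV vk)) (LV vf))
        (LA (LV vg)
          (LL vz (LA (LA (LV vh) (LA (LC sigma) (LV vk)))
                     (LA (LA (LA (LC chi) (LV vk)) (LV vf)) (LV vz)))))))))))).
Definition Psi : term := lam2term PsiL.

From Stdlib Require Import Arith List Relations Lia Classical.
Import ListNotations.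

Local Notation "t ⋅ u" := (tapp t u) (at level 40, left associativity).

(* [H k phi] runs as [U] applied to [(chi k phi)(G L)], where [L = \z. (H k^+)(chi k phi z)]; this
   argument answers like [phi] below [k] and like [zeta = G L] from [k] on.
   If [zeta] realizes [bot], it realizes [F[k,a]] for every [a], and [(H k^+)(chi k phi zeta)]
   cannot realize [bot]: otherwise compare the run of [U] on that argument with its run on
   [eta = /\_n (if n < k then phi n else zeta)], which realizes [forall n F[n,f[n]]] for an [f]
   coding [a_0, ..., a_(k-1)]. The [eta]-run is in the pole and shows that [U] only applies its
   argument to numerals, on which the two agree, so [H k phi] would realize [bot].
   Otherwise some stack refutes [G L]; as [G] realizes [forall n ~ forall x ~ F[n,x]], [L] fails
   to realize [~ F[k,x]] for some [x], at some [zeta_{k,phi}] realizing [F[k,x]], and [L zeta_{k,phi}]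
   runs as [(H k^+)(chi k phi zeta_{k,phi})].
   Both comparisons of runs are simulations of the deterministic machine, by induction on the
   number of steps a reference run needs to reach [p]; they must see through the bookkeeping of
   the combinatory translation: paddings by [I], unfoldings of the fixpoint, and the different
   compilations of [chi k f z] and [k^+]. *)

Definition state := (term * stack)%type.

Definition in_pole (s : state) : Prop := pole (fst s) (snd s).

Definition step_fun (s : state) : option state :=
  match s with
  | (t ⋅ u, pi) => Some (t, u :: pi)
  | (tB, x :: y :: z :: pi) => Some (x, y ⋅ z :: pi)
  | (tC, x :: y :: z :: pi) => Some (x, z :: y :: pi)
  | (tI, x :: pi) => Some (x, pi)
  | (tK, x :: _ :: pi) => Some (x, pi)
  | (tW, x :: y :: pi) => Some (x, y :: y :: pi)
  | (tcc, x :: pi) => Some (x, kont pi :: pi)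
  | (tA, x :: _) => Some (x, [])
  | _ => None
  end.

Lemma step_fun_sound s s' : step_fun s = Some s' -> step s s'.
Proof.
  destruct s as [t pi]; intros H.
  destruct t; simpl in H; try discriminate;
    repeat match type of H with
           | context [match ?l with _ => _ end] => destruct l; try discriminate
           end;
    injection H as <-; constructor.
Qed.

Lemma step_fun_complete s s' : step s s' -> (forall f, fst s <> tbig f) -> step_fun s = Some s'.
Proof. intros H Hf; inversion H; subst; simpl; auto. exfalso; eapply Hf; reflexivity. Qed.

Fixpoint run (n : nat) (s : state) : state :=
  match n with
  | 0 => s
  | S n => match step_fun s with Some s' => run n s' | None => s end
  end.

Lemma exec_run n s : exec s (run n s).
Proof.
  revert s; induction n as [|n IH]; intros s; simpl; [apply rt_refl|].
  destruct (step_fun s) eqn:E; [|apply rt_refl].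
  eapply rt_trans; [apply rt_step, step_fun_sound, E | apply IH].
Qed.

(* [vm_compute] runs the machine on open terms: the runs below never need to inspect a variable. *)
Ltac compute_run n := eapply rt_trans; [apply (exec_run n)|]; vm_compute.
Ltac solve_run n := compute_run n; apply rt_refl.

Lemma num_inj n m : num n = num m -> n = m.
Proof. revert m; induction n; intros [|m] H; inversion H; auto. Qed.

Lemma step_deterministic s s1 s2 : step s s1 -> step s s2 -> s1 = s2.
Proof.
  intros H1 H2; inversion H1; subst; inversion H2; subst; auto.
  match goal with H : num _ = num _ |- _ => apply num_inj in H; subst end; auto.
Qed.

Lemma p_terminal pi s : ~ step (tp, pi) s.
Proof. intros H; inversion H. Qed.

Inductive steps : nat -> state -> state -> Prop :=
| steps0 s : steps 0 s s
| stepsS n s s' s'' : step s s' -> steps n s' s'' -> steps (S n) s s''.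

Lemma exec_steps s s' : exec s s' -> exists n, steps n s s'.
Proof.
  intros H; apply clos_rt_rt1n in H; induction H as [|s s1 s' H _ [n Hn]].
  - exists 0; constructor.
  - exists (S n); econstructor; eauto.
Qed.

Lemma steps_exec n s s' : steps n s s' -> exec s s'.
Proof. induction 1; [apply rt_refl | eapply rt_trans; [apply rt_step|]; eauto]. Qed.

Notation exec_plus := (clos_trans _ step).

Lemma exec_plus_steps s s' : exec_plus s s' -> exists n, 0 < n /\ steps n s s'.
Proof.
  intros H; apply clos_trans_t1n in H.
  induction H as [s0 s' H|s0 s1 s' H _ [n [_ Hn]]].
  - exists 1; split; [lia|]; repeat econstructor; eauto.
  - exists (S n); split; [lia|]; econstructor; eauto.
Qed.

Lemma exec_plus_of_step_exec s s1 s' : step s s1 -> exec s1 s' -> exec_plus s s'.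
Proof.
  intros H H'; apply clos_rt_rt1n in H'; revert s H.
  induction H' as [|s1 s2 s' H1 _ IH]; intros s H; [apply t_step, H|].
  eapply t_trans; [apply t_step, H | apply IH, H1].
Qed.

Lemma exec_plus_of_neq s s' : exec s s' -> s <> s' -> exec_plus s s'.
Proof.
  intros H Hneq; apply clos_rt_rt1n in H; destruct H as [|s1 s2 Hst Hrest]; [congruence|].
  apply (exec_plus_of_step_exec _ s1); [exact Hst | apply clos_rt1n_rt, Hrest].
Qed.

Lemma steps_to_terminal n s t : steps n s t -> (forall u, ~ step t u) ->
  forall m s', steps m s s' -> m <= n /\ steps (n - m) s' t.
Proof.
  induction 1 as [s|n s s1 t H Hn IH]; intros Ht m s' Hm.
  - destruct Hm as [|m s s1 s' H]; [split; auto; constructor|].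
    exfalso; eapply Ht; eauto.
  - destruct Hm as [|m s s1' s' H' Hm]; [split; [lia|]; econstructor; eauto|].
    rewrite (step_deterministic _ _ _ H H') in *.
    destruct (IH Ht _ _ Hm); split; [lia|auto].
Qed.

Lemma in_pole_exec s s' : in_pole s -> exec s s' -> in_pole s'.
Proof.
  destruct s as [t pi], s' as [t' pi']; intros [v Hv] H.
  apply exec_steps in Hv as [n Hn]; apply exec_steps in H as [m Hm].
  destruct (steps_to_terminal _ _ _ Hn (p_terminal v) _ _ Hm) as [_ Hs].
  exists v; eapply steps_exec; eauto.
Qed.

Lemma in_pole_exec_back s s' : exec s s' -> in_pole s' -> in_pole s.
Proof.
  destruct s, s'; intros H [v Hv]; exists v; eapply rt_trans; eauto.
Qed.

Lemma in_pole_cases s : in_pole s -> fst s = tp \/ exists s', step s s'.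
Proof.
  destruct s as [t pi]; intros [v Hv]; apply clos_rt_rt1n in Hv.
  inversion Hv; subst; simpl; eauto.
Qed.

Lemma not_in_pole_stuck n s : step_fun (run n s) = None ->
  (forall f, fst (run n s) <> tbig f) -> fst (run n s) <> tp -> ~ in_pole s.
Proof.
  intros Hnone Hbig Hp Hs.
  destruct (in_pole_cases _ (in_pole_exec _ _ Hs (exec_run n s))) as [H|[s' H]]; auto.
  rewrite (step_fun_complete _ _ H Hbig) in Hnone; discriminate.
Qed.

Ltac stuck n := apply (not_in_pole_stuck n); vm_compute; congruence.

Lemma pole_steps_decrease n v s s' : steps n s (tp, v) -> exec_plus s s' ->
  exists n', n' < n /\ steps n' s' (tp, v).
Proof.
  intros Hn Hs; apply exec_plus_steps in Hs as [m [Hm Hs]].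
  destruct (steps_to_terminal _ _ _ Hn (p_terminal v) _ _ Hs).
  exists (n - m); split; [lia|auto].
Qed.

(** * Simulations *)

Section Simulation.
Variable sim : state -> state -> state -> Prop.
Variable inv : state -> Prop.

Definition sim_progress (S1 S2 S3 : state) : Prop :=
  in_pole S1 \/ exists S1' S2' S3',
    exec S1 S1' /\ exec_plus S2 S2' /\ exec S3 S3' /\ sim S1' S2' S3'.

Hypothesis sim_step : forall S1 S2 S3, sim S1 S2 S3 ->
  in_pole S2 -> in_pole S3 -> inv S1 -> sim_progress S1 S2 S3.
Hypothesis inv_exec : forall S S', inv S -> exec S S' -> inv S'.

(* Induction on the number of steps [S2] needs to reach [p]. *)
Theorem in_pole_by_simulation S1 S2 S3 :
  sim S1 S2 S3 -> in_pole S2 -> in_pole S3 -> inv S1 -> in_pole S1.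
Proof.
  intros Hsim P2 P3 I1.
  destruct S2 as [t2 s2]; destruct P2 as [v Hv]; apply exec_steps in Hv as [n Hn].
  revert S1 t2 s2 S3 Hsim P3 I1 Hn; induction n as [n IH] using lt_wf_ind.
  intros S1 t2 s2 S3 Hsim P3 I1 Hn.
  assert (P2 : in_pole (t2, s2)) by (exists v; eapply steps_exec, Hn).
  destruct (sim_step _ _ _ Hsim P2 P3 I1)
    as [|[S1' [[t2' s2'] [S3' [E1 [E2 [E3 Hsim']]]]]]]; auto.
  destruct (pole_steps_decrease _ _ _ _ Hn E2) as [n' [Hlt Hn']].
  apply (in_pole_exec_back _ _ E1).
  eapply (IH n' Hlt); eauto using in_pole_exec.
Qed.

End Simulation.

Inductive Forall3 (R : term -> term -> term -> Prop) : stack -> stack -> stack -> Prop :=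
| Forall3_nil : Forall3 R [] [] []
| Forall3_cons a b c l1 l2 l3 : R a b c -> Forall3 R l1 l2 l3 -> Forall3 R (a :: l1) (b :: l2) (c :: l3).

Definition state_rel3 (R : term -> term -> term -> Prop) (S1 S2 S3 : state) : Prop :=
  R (fst S1) (fst S2) (fst S3) /\ Forall3 R (snd S1) (snd S2) (snd S3).

Section Lockstep.
Variable R : term -> term -> term -> Prop.
Hypothesis R_refl : forall t, R t t t.
Hypothesis R_app : forall a1 a2 a3 b1 b2 b3, R a1 a2 a3 -> R b1 b2 b3 ->
  R (a1 ⋅ b1) (a2 ⋅ b2) (a3 ⋅ b3).
Hypothesis R_num : forall u1 u3 n, R u1 (num n) u3 -> u1 = num n /\ u3 = num n.

Lemma Forall3_kont s1 s2 s3 : Forall3 R s1 s2 s3 -> R (kont s1) (kont s2) (kont s3).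
Proof. induction 1; simpl; unfold ell; auto. Qed.

Lemma sim_progress_step sim S1 S2 S3 S1' S2' S3' : step S1 S1' -> step S2 S2' -> step S3 S3' ->
  sim S1' S2' S3' -> sim_progress sim S1 S2 S3.
Proof.
  intros; right; exists S1', S2', S3'; split; [apply rt_step|split; [apply t_step|split; [apply rt_step|]]]; assumption.
Qed.

Lemma same_head_lockstep c s1 s2 s3 : Forall3 R s1 s2 s3 -> in_pole (c, s2) ->
  sim_progress (state_rel3 R) (c, s1) (c, s2) (c, s3).
Proof.
  intros HF P2.
  destruct (in_pole_cases _ P2) as [Hp|[S' Hs]].
  - simpl in Hp; subst; left; exists s1; apply rt_refl.
  - inversion Hs; subst;
      repeat match goal with H : Forall3 R _ (_ :: _) _ |- _ => inversion H; subst; clear H end;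
      try match goal with H : R _ (num _) _ |- _ => destruct (R_num _ _ _ H) as [-> ->] end;
      (eapply sim_progress_step; [constructor..|]);
      repeat split; simpl; repeat constructor; auto using Forall3_kont.
Qed.

End Lockstep.

(** * The run of [Psi] *)

(* The compiled [Psi] is [B (B Y) Phi] with [Y = Xc Xc] the compiled [XX], so [Psi G U] runs as
   [Y (Phi G U)]; [fix_step Xc Xc] is [Y] after one step. The [_c] terms are subterms of [Phi]. *)
Definition Xc : term := lam2term XL.
Definition fix_step : term := tC ⋅ (tB ⋅ tB ⋅ (Scomb ⋅ tI ⋅ tI)) ⋅ tI.
Definition rot : term := tC ⋅ (tB ⋅ tB ⋅ (tB ⋅ tB ⋅ (tB ⋅ tB ⋅ tI))).
Definition cont_c : term :=
  tC ⋅ (tB ⋅ Scomb ⋅ (tB ⋅ (tB ⋅ tB) ⋅ (tB ⋅ (tB ⋅ tB) ⋅ (tC ⋅ (tB ⋅ tB ⋅ tI) ⋅ (tB ⋅ sigma ⋅ tI))))).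
Definition chi_c : term :=
  tC ⋅ (tB ⋅ tC ⋅ (tB ⋅ (tB ⋅ tB) ⋅ (tC ⋅ (tB ⋅ tB ⋅ (tB ⋅ chi ⋅ tI)) ⋅ tI))) ⋅ tI.
Definition arg_c : term :=
  tB ⋅ (tB ⋅ (Scomb ⋅ (tB ⋅ Scomb ⋅ (tC ⋅ (tB ⋅ tB ⋅ (tB ⋅ chi ⋅ tI)) ⋅ tI)))) ⋅ (rot ⋅ (cont_c ⋅ chi_c)).

Definition Phi : term := tB ⋅ rot ⋅ arg_c.

Lemma Psi_decomposition : Psi = tB ⋅ (tB ⋅ (Xc ⋅ Xc)) ⋅ Phi.
Proof. reflexivity. Qed.

Fixpoint pad (a : nat) (t : term) : term :=
  match a with 0 => t | S a => tI ⋅ pad a t end.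

Section PsiTerms.
Variables G U : term.

(* [H_unfolded a b] stands for [H = Psi G U] inside its own run; [a], [b] count [I]-paddings. *)
Definition H_unfolded (a b : nat) : term := fix_step ⋅ pad a Xc ⋅ pad b (Phi ⋅ G ⋅ U).
(* [(chi k f) (G (G_cont h k f))]: what [H k f] passes to [U]. *)
Definition U_arg (h k f : term) : term := arg_c ⋅ G ⋅ h ⋅ k ⋅ f.
(* [G (G_cont h k f)]: the value of [U_arg h k f] from [k] on. *)
Definition G_call (h k f : term) : term := rot ⋅ (cont_c ⋅ chi_c) ⋅ G ⋅ h ⋅ k ⋅ f.
End PsiTerms.

(* [\z. (h k^+) (chi k f z)], with [k^+] compiled as [B sigma I k] and [chi k f z] as [chi_c k f z]. *)
Definition G_cont (h k f : term) : term := cont_c ⋅ chi_c ⋅ h ⋅ k ⋅ f.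
Definition chi3 (k f z : term) : term := chi ⋅ k ⋅ f ⋅ z.
Definition chi3_c (k f z : term) : term := chi_c ⋅ k ⋅ f ⋅ z.
Definition succ_c (k : term) : term := tB ⋅ sigma ⋅ tI ⋅ k.

(* The compiled [a = \x\y yx], [\d 0], [\d 1] and the stages of the comparison [(i<k)]. *)
Definition lam_a : term := tB ⋅ (tC ⋅ tI) ⋅ tI.
Definition const_zero : term := tK ⋅ num 0.
Definition const_one : term := tK ⋅ (tB ⋅ tK ⋅ tI).
Definition iter_zero (k : term) : term := k ⋅ lam_a ⋅ const_zero.
Definition iter_one (u : term) : term := tC ⋅ (tC ⋅ tI ⋅ lam_a) ⋅ const_one ⋅ u.
Definition app_I (f u : term) : term := tC ⋅ (tB ⋅ tB ⋅ tI) ⋅ tI ⋅ f ⋅ u.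

Lemma exec_pad a t s : exec (pad a t, s) (t, s).
Proof.
  induction a as [|a IH]; simpl; [apply rt_refl|].
  eapply rt_trans; [apply rt_step; constructor|].
  eapply rt_trans; [apply rt_step; constructor|]. apply IH.
Qed.

Lemma exec_I t s : exec (tI ⋅ t, s) (t, s).
Proof. apply (exec_pad 1). Qed.

Lemma exec_plus_I t s : exec_plus (tI ⋅ t, s) (t, s).
Proof. apply exec_plus_of_step_exec with (tI, t :: s); [constructor | apply rt_step; constructor]. Qed.

Lemma exec_sigma k f x s : exec (sigma ⋅ k, f :: x :: s) (f, k ⋅ f ⋅ x :: s).
Proof. solve_run 14. Qed.
Lemma exec_succ_c k f x s : exec (succ_c k, f :: x :: s) (f, tI ⋅ k ⋅ f ⋅ x :: s).
Proof. solve_run 17. Qed.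
Lemma exec_num0 x y s : exec (num 0, x :: y :: s) (y, s).
Proof. solve_run 3. Qed.
Lemma exec_Psi G U k f s :
  exec (Psi ⋅ G ⋅ U ⋅ k ⋅ f, s) (U, U_arg G (H_unfolded G U 0 0) k f :: s).
Proof. rewrite Psi_decomposition. solve_run 52. Qed.
Lemma exec_H_unfolded G U a b k f s :
  exec (H_unfolded G U a b, k :: f :: s) (U, U_arg G (H_unfolded G U (S a) (S b)) k f :: s).
Proof.
  compute_run 27. eapply rt_trans; [apply exec_pad|].
  compute_run 21. eapply rt_trans; [apply exec_pad|]. solve_run 23.
Qed.
Lemma exec_U_arg G h k f u s :
  exec (U_arg G h k f, u :: s) (chi, tI ⋅ k :: tI ⋅ f :: G_call G h k f :: u :: s).
Proof. solve_run 53. Qed.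
Lemma exec_G_call G h k f s : exec (G_call G h k f, s) (G, G_cont h k f :: s).
Proof. solve_run 23. Qed.
Lemma exec_G_cont h k f z s : exec (G_cont h k f, z :: s) (h, succ_c k :: chi3_c k f z :: s).
Proof. solve_run 49. Qed.
Lemma exec_chi3 k f z u s : exec (chi3 k f z, u :: s) (chi, k :: f :: z :: u :: s).
Proof. solve_run 3. Qed.
Lemma exec_chi3_c k f z u s :
  exec (chi3_c k f z, u :: s) (chi, tI ⋅ k :: tI ⋅ f :: tI ⋅ z :: u :: s).
Proof. solve_run 30. Qed.
Lemma exec_chi k f z u s :
  exec (chi, k :: f :: z :: u :: s) (k, lam_a :: const_zero :: iter_one u :: app_I f u :: tI ⋅ z :: s).
Proof. solve_run 65. Qed.
Lemma exec_lam_a x y s : exec (lam_a, x :: y :: s) (y, tI ⋅ x :: s).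
Proof. solve_run 6. Qed.
Lemma exec_const_zero y s : exec (const_zero, y :: s) (num 0, s).
Proof. solve_run 2. Qed.
Lemma exec_const_one w x y s : exec (const_one, w :: x :: y :: s) (x, s).
Proof. solve_run 8. Qed.
Lemma exec_iter_zero k y s : exec (iter_zero k, y :: s) (k, lam_a :: const_zero :: y :: s).
Proof. solve_run 2. Qed.
Lemma exec_iter_one u x s : exec (iter_one u, x :: s) (u, lam_a :: const_one :: x :: s).
Proof. solve_run 8. Qed.
Lemma exec_app_I f u s : exec (app_I f u, s) (f, tI ⋅ u :: s).
Proof. solve_run 11. Qed.

Fixpoint numeral_like (m : nat) (k : term) : Prop :=
  match m with
  | 0 => forall f x s, exec (k, f :: x :: s) (x, s)
  | S m => forall f x s, exists k', numeral_like m k' /\ exec (k, f :: x :: s) (f, k' ⋅ f ⋅ x :: s)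
  end.

Lemma numeral_like_num m : numeral_like m (num m).
Proof.
  induction m as [|m IH]; simpl; intros.
  - apply exec_num0.
  - exists (num m); split; [exact IH | apply exec_sigma].
Qed.

Lemma numeral_like_pad a m k : numeral_like m k -> numeral_like m (pad a k).
Proof.
  intros H; induction a as [|a IH]; [exact H|]; simpl.
  destruct m; simpl in *; intros f x s.
  - eapply rt_trans; [apply exec_I | apply IH].
  - destruct (IH f x s) as [k' [Hk' E]].
    exists k'; split; [exact Hk' | eapply rt_trans; [apply exec_I | exact E]].
Qed.

Lemma numeral_like_I m k : numeral_like m k -> numeral_like m (tI ⋅ k).
Proof. apply (numeral_like_pad 1). Qed.

Lemma numeral_like_sigma m k : numeral_like m k -> numeral_like (S m) (sigma ⋅ k).
Proof. intros H f x s; exists k; split; [exact H | apply exec_sigma]. Qed.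

Lemma numeral_like_succ_c m k : numeral_like m k -> numeral_like (S m) (succ_c k).
Proof. intros H f x s; exists (tI ⋅ k); split; [apply numeral_like_I, H | apply exec_succ_c]. Qed.

(* [u] and [k] are iterated in turn, [a] swapping the two loops, until one of them runs out. *)
Lemma exec_compare m n k u v f z s : numeral_like m k -> numeral_like n u ->
  (forall x r, exec (v, x :: r) (u, lam_a :: const_one :: x :: r)) ->
  exec (k, lam_a :: const_zero :: v :: f :: z :: s) (if n <? m then (f, s) else (z, s)).
Proof.
  revert n k u v; induction m as [|m IH]; intros n k u v Hk Hu Hv; simpl in Hk.
  - eapply rt_trans; [apply Hk|]. eapply rt_trans; [apply exec_const_zero|].
    destruct n; apply exec_num0.
  - destruct (Hk lam_a const_zero (v :: f :: z :: s)) as [k' [Hk' E]].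
    eapply rt_trans; [apply E|]. eapply rt_trans; [apply exec_lam_a|].
    eapply rt_trans; [apply Hv|].
    destruct n as [|n]; simpl in Hu.
    + eapply rt_trans; [apply Hu | apply exec_const_one].
    + destruct (Hu lam_a const_one (tI ⋅ (k' ⋅ lam_a ⋅ const_zero) :: f :: z :: s)) as [u' [Hu' E']].
      eapply rt_trans; [apply E'|]. eapply rt_trans; [apply exec_lam_a|].
      eapply rt_trans; [apply exec_I|]. eapply rt_trans; [apply exec_iter_zero|].
      apply (IH n k' u'); auto.
      intros x r. eapply rt_trans; [apply exec_I|]. solve_run 2.
Qed.

Lemma exec_chi_compare m n k f z u s : numeral_like m k -> numeral_like n u ->
  exec (chi, k :: f :: z :: u :: s) (if n <? m then (f, tI ⋅ u :: s) else (z, s)).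
Proof.
  intros Hk Hu. eapply rt_trans; [apply exec_chi|].
  eapply rt_trans; [apply (exec_compare m n k u); auto; intros; apply exec_iter_one|].
  destruct (n <? m); [apply exec_app_I | apply exec_I].
Qed.

Lemma exec_chi_zero k f z u s : numeral_like 0 k ->
  exec (chi, k :: f :: z :: u :: s) (tI ⋅ z, s).
Proof.
  intros Hk. eapply rt_trans; [apply exec_chi|].
  eapply rt_trans; [apply Hk|]. eapply rt_trans; [apply exec_const_zero | apply exec_num0].
Qed.

Lemma exec_chi_succ m k f z u s : numeral_like (S m) k -> exists k', numeral_like m k' /\
  exec (chi, k :: f :: z :: u :: s)
       (u, lam_a :: const_one :: tI ⋅ iter_zero k' :: app_I f u :: tI ⋅ z :: s).
Proof.
  intros Hk. destruct (Hk lam_a const_zero (iter_one u :: app_I f u :: tI ⋅ z :: s)) as [k' [Hk' E]].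
  exists k'; split; [exact Hk'|]. eapply rt_trans; [apply exec_chi|].
  eapply rt_trans; [apply E|]. eapply rt_trans; [apply exec_lam_a | apply exec_iter_one].
Qed.

(* The subterms of numerals. *)
Definition numeral_piece (t : term) : Prop :=
  (exists n, t = num n) \/
  In t [sigma; tB ⋅ tW; tC ⋅ (tB ⋅ tB ⋅ tB); tB ⋅ tB ⋅ tB; tB ⋅ tB; tB; tC; tW; tK; tI].

Ltac not_numeral_piece :=
  let n := fresh "n" in let H := fresh "H" in
  intros [[n H]|H]; [destruct n; discriminate | simpl in H; intuition discriminate].

Lemma numeral_piece_app a b : numeral_piece (a ⋅ b) -> numeral_piece a /\ numeral_piece b.
Proof.
  intros [[[|n] H]|H]; simpl in H.
  - injection H as -> ->; split; right; simpl; intuition.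
  - injection H as -> ->; split; [right; simpl; intuition | left; eauto].
  - unfold sigma in H; simpl in H.
    repeat (destruct H as [H|H];
              [try discriminate; injection H as Ha Hb; subst; split; right; simpl; intuition|]).
    contradiction.
Qed.

Lemma numeral_piece_I t : ~ numeral_piece (tI ⋅ t).
Proof. not_numeral_piece. Qed.

Lemma numeral_piece_app_cases a b : numeral_piece (a ⋅ b) ->
  (a = sigma /\ exists n, b = num n) \/ ((forall n, a <> num n) /\ (forall n, b <> num n)).
Proof.
  intros [[[|n] H]|H]; simpl in H.
  - injection H as -> ->; right; split; intros [|n]; discriminate.
  - injection H as -> ->; left; eauto.
  - right; unfold sigma in H; simpl in H.
    repeat (destruct H as [H|H]; [try discriminate; injection H as <- <-; split; intros [|n]; discriminate|]).
    contradiction.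
Qed.

Lemma exec_plus_of_length t s t' s' : exec (t, s) (t', s') -> length s <> length s' ->
  exec_plus (t, s) (t', s').
Proof. intros H Hlen; apply exec_plus_of_neq; [exact H | congruence]. Qed.

Fixpoint size (t : term) : nat :=
  match t with a ⋅ b => S (size a + size b) | _ => 1 end.

(** * The bookkeeping of the translation is invisible *)

Section Agreement.
Variables G U : term.

Definition unfolded_H (h : term) : Prop := exists a b, h = H_unfolded G U a b.
Definition same_numeral (k1 k2 : term) : Prop := exists m, numeral_like m k1 /\ numeral_like m k2.
Definition chi_form (t k f z : term) : Prop := t = chi3_c k f z \/ t = chi3 k f z.

(* [agree t1 t2]: [t1] does what [t2] does, up to the bookkeeping of the combinatory
   translation (paddings by [I], unfoldings of [H], the two compilations of [chi k f z]). *)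
Inductive agree : term -> term -> Prop :=
| agree_refl t : agree t t
| agree_app a1 a2 b1 b2 : agree a1 a2 -> agree b1 b2 -> agree (a1 ⋅ b1) (a2 ⋅ b2)
| agree_padR t1 t2 : agree t1 t2 -> agree t1 (tI ⋅ t2)
| agree_padL t1 t2 : agree t1 (tI ⋅ t2) -> agree (tI ⋅ t1) (tI ⋅ t2)
| agree_U_arg h1 h2 k1 k2 f1 f2 : unfolded_H h1 -> unfolded_H h2 -> same_numeral k1 k2 ->
    agree f1 f2 -> agree (U_arg G h1 k1 f1) (U_arg G h2 k2 f2)
| agree_G_call h1 h2 k1 k2 f1 f2 : unfolded_H h1 -> unfolded_H h2 -> same_numeral k1 k2 ->
    agree f1 f2 -> agree (G_call G h1 k1 f1) (G_call G h2 k2 f2)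
| agree_G_cont h1 h2 k1 k2 f1 f2 : unfolded_H h1 -> unfolded_H h2 -> same_numeral k1 k2 ->
    agree f1 f2 -> agree (G_cont h1 k1 f1) (G_cont h2 k2 f2)
| agree_chi t1 t2 k1 k2 f1 f2 z1 z2 : chi_form t1 k1 f1 z1 -> chi_form t2 k2 f2 z2 ->
    same_numeral k1 k2 -> agree f1 f2 -> agree z1 z2 -> agree t1 t2
| agree_iter_zero k1 k2 : same_numeral k1 k2 -> agree (iter_zero k1) (iter_zero k2)
| agree_app_I a b f1 f2 u1 u2 : agree f1 f2 -> agree u1 u2 ->
    agree (app_I (pad a f1) u1) (app_I (pad b f2) u2).

Definition agree_states (S1 S2 : state) : Prop :=
  agree (fst S1) (fst S2) /\ Forall2 agree (snd S1) (snd S2).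

Definition agree_progress (S1 S2 : state) : Prop :=
  in_pole S1 \/ exists S1' S2', exec S1 S1' /\ exec_plus S2 S2' /\ agree_states S1' S2'.

Lemma agree_numeral_piece t1 t2 : agree t1 t2 -> numeral_piece t2 -> t1 = t2.
Proof.
  induction 1 as [| a1 a2 b1 b2 _ IHa _ IHb | | | h1 h2 | h1 h2 | h1 h2 | t1 t2 k1 k2 f1 f2 z1 z2 _ Ht2
                  | | ]; intros Hnum; auto.
  - destruct (numeral_piece_app _ _ Hnum); f_equal; auto.
  - now apply numeral_piece_I in Hnum.
  - now apply numeral_piece_I in Hnum.
  - revert Hnum; unfold U_arg; not_numeral_piece.
  - revert Hnum; unfold G_call; not_numeral_piece.
  - revert Hnum; unfold G_cont; not_numeral_piece.
  - destruct Ht2; subst; revert Hnum; [unfold chi3_c|unfold chi3]; not_numeral_piece.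
  - revert Hnum; unfold iter_zero; not_numeral_piece.
  - revert Hnum; unfold app_I; not_numeral_piece.
Qed.

Lemma agree_pad a b t1 t2 : agree t1 t2 -> agree (pad (S a) t1) (pad (S b) t2).
Proof.
  intros H.
  assert (Ha : forall a, agree (pad (S a) t1) (tI ⋅ t2)).
  { induction a0 as [|a0 IH]; simpl; [apply agree_app; [apply agree_refl | exact H]|].
    apply agree_padL, IH. }
  induction b as [|b IH]; [apply Ha | apply agree_padR, IH].
Qed.

Lemma same_numeral_pad c1 c2 k1 k2 : same_numeral k1 k2 -> same_numeral (pad c1 k1) (pad c2 k2).
Proof. intros [m [H1 H2]]; exists m; split; apply numeral_like_pad; auto. Qed.

Lemma agree_progress_exec S1 S2 S1' S2' : exec S1 S1' -> exec_plus S2 S2' ->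
  agree_states S1' S2' -> agree_progress S1 S2.
Proof. intros; right; exists S1', S2'; auto. Qed.

Lemma agree_progress_chi a1 a2 k1 k2 f1 f2 z1 z2 u1 u2 r1 r2 S1 t2 :
  exec S1 (chi, k1 :: pad a1 f1 :: z1 :: u1 :: r1) ->
  exec (t2, u2 :: r2) (chi, k2 :: pad a2 f2 :: z2 :: u2 :: r2) ->
  same_numeral k1 k2 -> agree f1 f2 -> agree (tI ⋅ z1) (tI ⋅ z2) -> agree u1 u2 ->
  Forall2 agree r1 r2 -> agree_progress S1 (t2, u2 :: r2).
Proof.
  intros E1 E2 [[|m] [Hk1 Hk2]] Hf Hz Hu Hr.
  - apply (agree_progress_exec _ _ (tI ⋅ z1, r1) (tI ⋅ z2, r2)).
    + eapply rt_trans; [exact E1 | apply exec_chi_zero, Hk1].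
    + apply exec_plus_of_length; [eapply rt_trans; [exact E2 | apply exec_chi_zero, Hk2] | simpl; lia].
    + split; auto.
  - destruct (exec_chi_succ m k1 (pad a1 f1) z1 u1 r1 Hk1) as [k1' [Hk1' E1']].
    destruct (exec_chi_succ m k2 (pad a2 f2) z2 u2 r2 Hk2) as [k2' [Hk2' E2']].
    eapply agree_progress_exec.
    + eapply rt_trans; [exact E1 | exact E1'].
    + apply exec_plus_of_length; [eapply rt_trans; [exact E2 | exact E2'] | simpl; lia].
    + split; [exact Hu|]; simpl.
      repeat apply Forall2_cons; auto using agree_refl, agree_app_I.
      apply agree_app; [apply agree_refl | apply agree_iter_zero; exists m; auto].
Qed.

Lemma agree_progress_U_arg h1 h2 k1 k2 f1 f2 s1 s2 :
  unfolded_H h1 -> unfolded_H h2 -> same_numeral k1 k2 -> agree f1 f2 ->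
  Forall2 agree s1 s2 -> in_pole (U_arg G h2 k2 f2, s2) ->
  agree_progress (U_arg G h1 k1 f1, s1) (U_arg G h2 k2 f2, s2).
Proof.
  intros Hh1 Hh2 Hk Hf Hs P2.
  destruct Hs as [|u1 u2 r1 r2 Hu Hr]; [exfalso; revert P2; stuck 74|].
  apply (agree_progress_chi 1 1 (tI ⋅ k1) (tI ⋅ k2) f1 f2 (G_call G h1 k1 f1) (G_call G h2 k2 f2)
           u1 u2 r1 r2); auto using exec_U_arg.
  - apply (same_numeral_pad 1 1), Hk.
  - apply agree_app; [apply agree_refl | apply agree_G_call; auto].
Qed.

Lemma exec_chi_form t k f z u s : chi_form t k f z -> exists c,
  exec (t, u :: s) (chi, pad c k :: pad c f :: pad c z :: u :: s).
Proof.
  intros [-> | ->]; [exists 1; apply exec_chi3_c | exists 0; apply exec_chi3].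
Qed.

Lemma agree_progress_chi_form t1 t2 k1 k2 f1 f2 z1 z2 s1 s2 :
  chi_form t1 k1 f1 z1 -> chi_form t2 k2 f2 z2 -> same_numeral k1 k2 -> agree f1 f2 ->
  agree z1 z2 -> Forall2 agree s1 s2 -> in_pole (t2, s2) -> agree_progress (t1, s1) (t2, s2).
Proof.
  intros H1 H2 Hk Hf Hz Hs P2.
  destruct Hs as [|u1 u2 r1 r2 Hu Hr].
  - exfalso; revert P2; destruct H2 as [-> | ->]; [stuck 51 | stuck 24].
  - destruct (exec_chi_form _ _ _ _ u1 r1 H1) as [c1 E1].
    destruct (exec_chi_form _ _ _ _ u2 r2 H2) as [c2 E2].
    apply (agree_progress_chi c1 c2 (pad c1 k1) (pad c2 k2) f1 f2 (pad c1 z1) (pad c2 z2) u1 u2 r1 r2);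
      auto using same_numeral_pad.
    apply (agree_pad c1 c2), Hz.
Qed.

Lemma agree_progress_G_cont h1 h2 k1 k2 f1 f2 s1 s2 :
  unfolded_H h1 -> unfolded_H h2 -> same_numeral k1 k2 -> agree f1 f2 ->
  Forall2 agree s1 s2 -> in_pole (G_cont h2 k2 f2, s2) ->
  agree_progress (G_cont h1 k1 f1, s1) (G_cont h2 k2 f2, s2).
Proof.
  intros [a1 [b1 ->]] [a2 [b2 ->]] [m [Hk1 Hk2]] Hf Hs P2.
  destruct Hs as [|z1 z2 r1 r2 Hz Hr]; [exfalso; revert P2; stuck 37|].
  assert (E : forall a b k f z r, exec (G_cont (H_unfolded G U a b) k f, z :: r)
     (U, U_arg G (H_unfolded G U (S a) (S b)) (succ_c k) (chi3_c k f z) :: r)).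
  { intros; eapply rt_trans; [apply exec_G_cont | apply exec_H_unfolded]. }
  eapply agree_progress_exec; [apply E | |].
  - apply exec_plus_of_neq; [apply E|].
    intros Heq; injection Heq as _ Hz2; apply (f_equal size) in Hz2.
    unfold U_arg, chi3_c in Hz2; simpl in Hz2; lia.
  - split; [apply agree_refl|]; constructor; auto.
    apply agree_U_arg; [do 2 eexists; reflexivity .. | |].
    + exists (S m); split; apply numeral_like_succ_c; auto.
    + apply agree_chi with k1 k2 f1 f2 z1 z2; [left; reflexivity .. | exists m | |]; auto.
Qed.

Lemma agree_progress_iter_zero k1 k2 s1 s2 : same_numeral k1 k2 ->
  Forall2 agree s1 s2 -> in_pole (iter_zero k2, s2) ->
  agree_progress (iter_zero k1, s1) (iter_zero k2, s2).
Proof.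
  intros [[|m] [Hk1 Hk2]] Hs P2; destruct Hs as [|y1 y2 r1 r2 Hy Hr].
  - exfalso; apply (in_pole_exec _ (const_zero, [])) in P2; [revert P2; stuck 1|].
    eapply rt_trans; [solve_run 2 | apply Hk2].
  - apply (agree_progress_exec _ _ (num 0, r1) (num 0, r2)); [| |split; auto using agree_refl].
    + eapply rt_trans; [apply exec_iter_zero|]. eapply rt_trans; [apply Hk1 | apply exec_const_zero].
    + apply exec_plus_of_length; [|simpl; lia].
      eapply rt_trans; [apply exec_iter_zero|]. eapply rt_trans; [apply Hk2 | apply exec_const_zero].
  - exfalso; destruct (Hk2 lam_a const_zero []) as [k' [_ E]].
    apply (in_pole_exec _ (lam_a, [k' ⋅ lam_a ⋅ const_zero])) in P2; [revert P2; stuck 4|].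
    eapply rt_trans; [solve_run 2 | exact E].
  - destruct (Hk1 lam_a const_zero (y1 :: r1)) as [k1' [Hk1' E1]].
    destruct (Hk2 lam_a const_zero (y2 :: r2)) as [k2' [Hk2' E2]].
    apply (agree_progress_exec _ _ (y1, tI ⋅ iter_zero k1' :: r1) (y2, tI ⋅ iter_zero k2' :: r2)).
    + eapply rt_trans; [apply exec_iter_zero|]. eapply rt_trans; [apply E1 | apply exec_lam_a].
    + apply exec_plus_of_neq.
      * eapply rt_trans; [apply exec_iter_zero|]. eapply rt_trans; [apply E2 | apply exec_lam_a].
      * intros Heq; injection Heq as H1 H2; subst; unfold iter_zero, const_zero in H2; discriminate.
    + split; [exact Hy|]; constructor; [|exact Hr].
      apply agree_app; [apply agree_refl | apply agree_iter_zero; exists m; auto].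
Qed.

Lemma agree_progress_app_I a b f1 f2 u1 u2 s1 s2 : agree f1 f2 -> agree u1 u2 ->
  Forall2 agree s1 s2 -> agree_progress (app_I (pad a f1) u1, s1) (app_I (pad b f2) u2, s2).
Proof.
  intros Hf Hu Hs.
  apply (agree_progress_exec _ _ (f1, tI ⋅ u1 :: s1) (f2, tI ⋅ u2 :: s2)).
  - eapply rt_trans; [apply exec_app_I | apply exec_pad].
  - apply exec_plus_of_length; [eapply rt_trans; [apply exec_app_I | apply exec_pad] | simpl; lia].
  - split; [exact Hf|]; constructor; [apply agree_app; [apply agree_refl | exact Hu] | exact Hs].
Qed.

Lemma Forall2_agree_refl s : Forall2 agree s s.
Proof. induction s; constructor; auto using agree_refl. Qed.

Definition agree3 (t1 t2 t3 : term) : Prop := agree t1 t2 /\ t3 = t2.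

Lemma Forall2_agree3 s1 s2 : Forall2 agree s1 s2 -> Forall3 agree3 s1 s2 s2.
Proof. induction 1; constructor; [split|]; auto. Qed.

Lemma Forall3_agree3 s1 s2 s3 : Forall3 agree3 s1 s2 s3 -> Forall2 agree s1 s2 /\ s3 = s2.
Proof. induction 1 as [|a b c l1 l2 l3 [H ->] _ [IH ->]]; auto. Qed.

Lemma agree_step t1 t2 s1 s2 : agree t1 t2 -> Forall2 agree s1 s2 -> in_pole (t2, s2) ->
  agree_progress (t1, s1) (t2, s2).
Proof.
  intros Ht; revert s1 s2; induction Ht as [t | a1 a2 b1 b2 Ha _ Hb _ | t1 t2 Ht _ | t1 t2 _ IH
    | | | | | | ]; intros s1 s2 Hs P2.
  - assert (R_app : forall a1 a2 a3 b1 b2 b3, agree3 a1 a2 a3 -> agree3 b1 b2 b3 ->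
              agree3 (a1 ⋅ b1) (a2 ⋅ b2) (a3 ⋅ b3)).
    { intros ? ? ? ? ? ? [H1 ->] [H2 ->]; split; auto using agree_app. }
    assert (R_num : forall u1 u3 n, agree3 u1 (num n) u3 -> u1 = num n /\ u3 = num n).
    { intros u1 u3 n [H ->]; split; auto.
      apply agree_numeral_piece; [exact H | left; eauto]. }
    destruct (same_head_lockstep agree3 (fun t => conj (agree_refl t) eq_refl) R_app R_num
                t s1 s2 s2 (Forall2_agree3 _ _ Hs) P2)
      as [|[S1' [S2' [S3' [E1 [E2 [_ [[Ht' _] HF]]]]]]]]; [left; auto|].
    apply Forall3_agree3 in HF as [HF _].
    apply (agree_progress_exec _ _ S1' S2'); [exact E1 | exact E2 | split; auto].
  - apply (agree_progress_exec _ _ (a1, b1 :: s1) (a2, b2 :: s2));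
      [apply rt_step; constructor | apply t_step; constructor | split; [|constructor]; auto].
  - apply (agree_progress_exec _ _ (t1, s1) (t2, s2)); [apply rt_refl| |split; auto].
    apply exec_plus_of_step_exec with (tI, t2 :: s2); [constructor | apply rt_step; constructor].
  - destruct (IH s1 s2 Hs P2) as [|[S1' [S2' [E1 [E2 HS]]]]].
    + left; apply (in_pole_exec_back _ _ (exec_I t1 s1)); assumption.
    + apply (agree_progress_exec _ _ S1' S2'); [eapply rt_trans; [apply exec_I | exact E1] | exact E2 | exact HS].
  - apply agree_progress_U_arg; auto.
  - apply (agree_progress_exec _ _ (G, G_cont h1 k1 f1 :: s1) (G, G_cont h2 k2 f2 :: s2));
      [apply exec_G_call | apply exec_plus_of_length; [apply exec_G_call | simpl; lia] |].
    split; [apply agree_refl | constructor; [apply agree_G_cont; auto | exact Hs]].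
  - apply agree_progress_G_cont; auto.
  - eapply agree_progress_chi_form; eauto.
  - apply agree_progress_iter_zero; auto.
  - apply agree_progress_app_I; auto.
Qed.

Theorem in_pole_agree S1 S2 : agree_states S1 S2 -> in_pole S2 -> in_pole S1.
Proof.
  intros HS HP.
  apply (in_pole_by_simulation (state_rel3 agree3) (fun _ => True)) with S2 S2; auto.
  - intros [t1 s1] [t2 s2] [t3 s3] [[Ht Ht3] HF] P2 _ _; simpl in *; subst t3.
    apply Forall3_agree3 in HF as [HF ->].
    destruct (agree_step t1 t2 s1 s2 Ht HF P2) as [|[S1' [S2' [E1 [E2 [Ht' HF']]]]]]; [left; auto|].
    right; exists S1', S2', S2'; split; [exact E1|split; [exact E2|split; [apply clos_t_clos_rt, E2|]]].
    split; [split; auto | apply Forall2_agree3, HF'].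
  - destruct HS as [Ht Hs]; split; [split; auto | apply Forall2_agree3, Hs].
Qed.

End Agreement.

Lemma pole_G_cont G U kk m phi z pi : numeral_like m kk ->
  pole (Psi ⋅ G ⋅ U ⋅ (sigma ⋅ kk) ⋅ (chi ⋅ kk ⋅ phi ⋅ z)) pi ->
  pole (G_cont (H_unfolded G U 0 0) kk phi) (z :: pi).
Proof.
  intros Hk HP.
  apply (in_pole_exec_back (G_cont (H_unfolded G U 0 0) kk phi, z :: pi)
           (U, U_arg G (H_unfolded G U 1 1) (succ_c kk) (chi3_c kk phi z) :: pi)).
  { eapply rt_trans; [apply exec_G_cont | apply exec_H_unfolded]. }
  apply (in_pole_agree G U _ (U, U_arg G (H_unfolded G U 0 0) (sigma ⋅ kk) (chi3 kk phi z) :: pi)).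
  - split; simpl; [apply agree_refl|].
    constructor; [|apply Forall2_agree_refl].
    apply agree_U_arg; [exists 1, 1; reflexivity | exists 0, 0; reflexivity | |].
    + exists (S m); split; [apply numeral_like_succ_c | apply numeral_like_sigma]; exact Hk.
    + apply agree_chi with kk kk phi phi z z; [left; reflexivity | right; reflexivity | exists m; auto | ..];
        apply agree_refl.
  - apply (in_pole_exec (_, pi) _ HP), exec_Psi.
Qed.


(** * [U] only sees numerals *)

Lemma valid_num N n : valid N (num n) /\ noparam (num n).
Proof. induction n; simpl; tauto. Qed.

Lemma valid_kont N s : validstack N s -> valid N (kont s).
Proof. induction 1; simpl; tauto. Qed.

Lemma valid_step N S S' : step S S' -> valid N (fst S) -> validstack N (snd S) ->
  valid N (fst S') /\ validstack N (snd S').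
Proof.
  intros H; inversion H; subst; simpl; intros Ht Hs; unfold validstack in *;
    repeat match goal with H : Forall _ (_ :: _) |- _ => inversion H; subst; clear H end;
    simpl in *; repeat split; repeat constructor; try tauto; auto using valid_kont.
  apply Ht.
Qed.

Lemma valid_exec N S S' : exec S S' -> valid N (fst S) -> validstack N (snd S) ->
  valid N (fst S') /\ validstack N (snd S').
Proof.
  induction 1 as [S S' H| |S S1 S' _ IH1 _ IH2]; intros Ht Hs; auto.
  - eapply valid_step; eauto.
  - destruct (IH1 Ht Hs); auto.
Qed.

Section ZetaRealizesBot.
Variables (N : nat) (G U phi : term) (k : nat).

Definition zeta : term := G_call G (H_unfolded G U 0 0) (num k) phi.

(* [eta] runs as [\n. if n < k then phi n else zeta] on numerals: entry [n] of the [tbig]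
   is [\f\z. f n] below [k] and [num 0 = \f\z. z] from [k] on. *)
Definition eta_entry (n : nat) : term :=
  if n <? k then tB ⋅ tK ⋅ (tC ⋅ tI ⋅ num n) else num 0.
Definition eta : term := tC ⋅ (tC ⋅ tbig eta_entry ⋅ phi) ⋅ zeta.

Definition arg_k : term := U_arg G (H_unfolded G U 0 0) (num k) phi.
Definition arg_k1 : term := U_arg G (H_unfolded G U 0 0) (sigma ⋅ num k) (chi3 (num k) phi zeta).

(* [tracks t1 t2 t3]: in the run of [U * arg_k . pi], [t1] stands where [t2] stands in the run
   of [U * arg_k1 . pi] and [t3] in the run of [U * eta . pi]. The [eta]-run certifies that
   [U] only ever applies its argument to numerals; the [arg_k1]-run, which unlike it does not
   pause on the [I]-paddings of those numerals, measures progress. *)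
Inductive tracks : term -> term -> term -> Prop :=
| tracks_refl t : tracks t t t
| tracks_app a1 a2 a3 b1 b2 b3 : tracks a1 a2 a3 -> tracks b1 b2 b3 ->
    tracks (a1 ⋅ b1) (a2 ⋅ b2) (a3 ⋅ b3)
| tracks_pad t1 t2 n : tracks t1 t2 (num n) -> tracks (tI ⋅ t1) (tI ⋅ t2) (num n)
| tracks_padR t1 t2 n : tracks t1 t2 (num n) -> tracks t1 (tI ⋅ t2) (num n)
| tracks_arg : tracks arg_k arg_k1 eta.

Lemma tracks_numeral_piece_mid t1 t2 t3 : tracks t1 t2 t3 -> numeral_piece t2 -> t1 = t2 /\ t3 = t2.
Proof.
  induction 1 as [| a1 a2 a3 b1 b2 b3 _ IHa _ IHb | | |]; intros Hnum.
  - auto.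
  - destruct (numeral_piece_app _ _ Hnum) as [Ha Hb].
    destruct (IHa Ha), (IHb Hb); subst; auto.
  - now apply numeral_piece_I in Hnum.
  - now apply numeral_piece_I in Hnum.
  - revert Hnum; unfold arg_k1, U_arg; not_numeral_piece.
Qed.

Lemma tracks_numeral_piece_right t1 t2 t3 : tracks t1 t2 t3 -> numeral_piece t3 ->
  (t1 = t3 /\ t2 = t3) \/ (exists n, t3 = num n /\ numeral_like n t1 /\ numeral_like n t2).
Proof.
  induction 1 as [| a1 a2 a3 b1 b2 b3 _ IHa _ IHb | t1 t2 n _ IH | t1 t2 n _ IH |]; intros Hnum.
  - auto.
  - destruct (numeral_piece_app _ _ Hnum) as [Ha Hb].
    destruct (numeral_piece_app_cases _ _ Hnum) as [[-> [m ->]] | [Hna Hnb]].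
    + destruct (IHa Ha) as [[-> ->] | [n [E _]]]; [|destruct n; discriminate].
      destruct (IHb Hb) as [[-> ->] | [n [E [H1 H2]]]]; [left; auto|].
      apply num_inj in E as <-; right; exists (S m); split; [reflexivity|].
      split; apply numeral_like_sigma; auto.
    + destruct (IHa Ha) as [[-> ->] | [n [E _]]]; [|exfalso; eapply Hna; eauto].
      destruct (IHb Hb) as [[-> ->] | [n [E _]]]; [left; auto | exfalso; eapply Hnb; eauto].
  - right; exists n; split; [reflexivity|].
    destruct (IH (or_introl (ex_intro _ n eq_refl))) as [[-> ->] | [m [E [H1 H2]]]].
    + split; apply numeral_like_I, numeral_like_num.
    + apply num_inj in E as ->; split; apply numeral_like_I; auto.
  - right; exists n; split; [reflexivity|].
    destruct (IH (or_introl (ex_intro _ n eq_refl))) as [[-> ->] | [m [E [H1 H2]]]].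
    + split; [|apply numeral_like_I]; apply numeral_like_num.
    + apply num_inj in E as ->; split; [|apply numeral_like_I]; auto.
  - exfalso; revert Hnum; unfold eta; not_numeral_piece.
Qed.

Lemma tracks_num u1 u2 n : tracks u1 u2 (num n) -> numeral_like n u1 /\ numeral_like n u2.
Proof.
  intros H; destruct (tracks_numeral_piece_right _ _ _ H) as [[-> ->] | [m [E [H1 H2]]]].
  - left; eauto.
  - split; apply numeral_like_num.
  - apply num_inj in E as ->; auto.
Qed.

Hypothesis zeta_realizes_bot : forall r, validstack N r -> pole zeta r.

Definition valid_state (S : state) : Prop := valid N (fst S) /\ validstack N (snd S).

Lemma exec_eta u r : exec (eta, u :: r) (tbig eta_entry, u :: phi :: zeta :: r).
Proof. solve_run 6. Qed.

Lemma exec_arg_k m u r : numeral_like m u ->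
  exec (arg_k, u :: r) (if m <? k then (phi, tI ⋅ u :: r) else (zeta, r)).
Proof.
  intros Hu; unfold arg_k; eapply rt_trans; [apply exec_U_arg|].
  eapply rt_trans; [apply (exec_chi_compare k m); [apply numeral_like_I, numeral_like_num | exact Hu]|].
  destruct (m <? k); [apply exec_I | apply rt_refl].
Qed.

Lemma exec_arg_k1_below m u r : m < k -> numeral_like m u ->
  exec (arg_k1, u :: r) (phi, tI ⋅ (tI ⋅ u) :: r).
Proof.
  intros Hmk Hu; unfold arg_k1; eapply rt_trans; [apply exec_U_arg|].
  eapply rt_trans; [apply (exec_chi_compare (S k) m); [apply numeral_like_I, (numeral_like_num (S k)) | exact Hu]|].
  replace (m <? S k) with true by (symmetry; apply Nat.ltb_lt; lia).
  eapply rt_trans; [apply exec_I|]. eapply rt_trans; [apply exec_chi3|].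
  eapply rt_trans; [apply (exec_chi_compare k m); [apply numeral_like_num | apply numeral_like_I, Hu]|].
  apply Nat.ltb_lt in Hmk; rewrite Hmk; apply rt_refl.
Qed.

Lemma exec_eta_below m r : m < k -> exec (eta, num m :: r) (phi, num m :: r).
Proof.
  intros Hmk; eapply rt_trans; [apply exec_eta|]. eapply rt_trans; [apply rt_step, s_big|].
  unfold eta_entry; apply Nat.ltb_lt in Hmk; rewrite Hmk; solve_run 9.
Qed.

Lemma tracks_progress_arg s1 s2 s3 : Forall3 tracks s1 s2 s3 -> in_pole (eta, s3) ->
  validstack N s1 -> sim_progress (state_rel3 tracks) (arg_k, s1) (arg_k1, s2) (eta, s3).
Proof.
  intros HF P3 Hs1.
  destruct HF as [|u1 u2 u3 r1 r2 r3 Hu HF]; [exfalso; revert P3; stuck 2|].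
  destruct (in_pole_cases _ (in_pole_exec _ _ P3 (exec_eta u3 r3))) as [Hp|[S' Hs]]; [discriminate|].
  inversion Hs as [| | | | | | | | f m r]; subst.
  destruct (tracks_num _ _ _ Hu) as [H1 H2].
  pose proof (exec_arg_k m u1 r1 H1) as E1.
  destruct (m <? k) eqn:Hmk.
  - apply Nat.ltb_lt in Hmk.
    right; exists (phi, tI ⋅ u1 :: r1), (phi, tI ⋅ (tI ⋅ u2) :: r2), (phi, num m :: r3).
    split; [exact E1|]; split; [|split; [apply exec_eta_below, Hmk|]].
    + apply exec_plus_of_neq; [apply (exec_arg_k1_below m); auto|].
      intros Heq; injection Heq as _ Hu2; apply (f_equal size) in Hu2; simpl in Hu2; lia.
    + split; [apply tracks_refl|]; constructor; [apply tracks_pad, tracks_padR, Hu | exact HF].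
  - left; apply (in_pole_exec_back _ _ E1), zeta_realizes_bot.
    inversion Hs1; assumption.
Qed.

Lemma tracks_step S1 S2 S3 : state_rel3 tracks S1 S2 S3 -> in_pole S2 -> in_pole S3 ->
  valid_state S1 -> sim_progress (state_rel3 tracks) S1 S2 S3.
Proof.
  destruct S1 as [t1 s1], S2 as [t2 s2], S3 as [t3 s3]; intros [Ht HF] P2 P3 [_ Hs1]; simpl in *.
  destruct Ht as [t | a1 a2 a3 b1 b2 b3 Ha Hb | t1 t2 n Ht | t1 t2 n Ht |].
  - apply same_head_lockstep; auto using tracks_refl, tracks_app.
    intros u1 u3 n Hu; destruct (tracks_numeral_piece_mid _ _ _ Hu) as [-> ->]; [left; eauto | auto].
  - eapply sim_progress_step; [constructor..|]; split; simpl; [|constructor]; auto.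
  - right; exists (t1, s1), (t2, s2), (num n, s3).
    split; [apply exec_I|]; split; [apply exec_plus_I|]; split; [apply rt_refl | split; auto].
  - right; exists (t1, s1), (t2, s2), (num n, s3).
    split; [apply rt_refl|]; split; [apply exec_plus_I|]; split; [apply rt_refl | split; auto].
  - apply tracks_progress_arg; auto.
Qed.

Theorem in_pole_arg_k pi : validstack N pi -> valid N U -> valid N arg_k ->
  in_pole (U, arg_k1 :: pi) -> in_pole (U, eta :: pi) -> in_pole (U, arg_k :: pi).
Proof.
  intros Hpi HU Harg P2 P3.
  apply (in_pole_by_simulation (state_rel3 tracks) valid_state tracks_step)
    with (U, arg_k1 :: pi) (U, eta :: pi); auto.
  - intros S S' [Ht Hs] E; apply (valid_exec N S S' E Ht Hs).
  - split; simpl; [apply tracks_refl|]; constructor; [apply tracks_arg|].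
    clear; induction pi; constructor; auto using tracks_refl.
  - split; simpl; [exact HU | constructor; auto].
Qed.

End ZetaRealizesBot.

Lemma finite_choice {V : Type} (d : V) (R : nat -> V -> Prop) k :
  (forall i, i < k -> exists a, R i a) -> exists a : nat -> V, forall i, i < k -> R i (a i).
Proof.
  induction k as [|k IH]; intros H; [exists (fun _ => d); intros; lia|].
  destruct IH as [a Ha]; [intros; apply H; lia|].
  destruct (H k (Nat.lt_succ_diag_r k)) as [ak Hak].
  exists (fun i => if i =? k then ak else a i); intros i Hi.
  destruct (Nat.eqb_spec i k); subst; auto; apply Ha; lia.
Qed.

Section Validity.
Variables (N : nat) (G U phi : term) (k : nat).
Hypotheses (G_valid : valid N G) (U_valid : valid N U) (phi_valid : valid N phi).

Lemma valid_pad a t : valid N t -> valid N (pad a t).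
Proof. induction a; simpl; tauto. Qed.

Lemma valid_H_unfolded a b : valid N (H_unfolded G U a b).
Proof. unfold H_unfolded; simpl; repeat split; auto using valid_pad; apply valid_pad; simpl; tauto. Qed.

Lemma valid_zeta : valid N (zeta G U phi k).
Proof. unfold zeta, G_call; simpl; pose proof valid_num N k; pose proof (valid_H_unfolded 0 0); tauto. Qed.

Lemma valid_arg_k : valid N (arg_k G U phi k).
Proof. unfold arg_k, U_arg; simpl; pose proof valid_num N k; pose proof (valid_H_unfolded 0 0); tauto. Qed.

Lemma valid_eta_entry n : valid N (eta_entry k n) /\ noparam (eta_entry k n).
Proof.
  unfold eta_entry; destruct (n <? k); simpl; pose proof (valid_num N n); pose proof (valid_num N 0); tauto.
Qed.

Lemma valid_eta : valid N (eta G U phi k).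
Proof. unfold eta; simpl; pose proof valid_zeta; pose proof valid_eta_entry; tauto. Qed.

End Validity.

Section RealizersFromPsi.
Variables (N : nat) (V : Type) (iota : nat -> V) (app : V -> V -> V) (F : V -> V -> stack -> Prop).
Variables (G U phi : term) (k : nat) (f : V).
Hypothesis phi_realizes : forall i, i < k -> realizes N (phi ⋅ num i) (F (iota i) (app f (iota i))).
Hypothesis zeta_realizes_bot : forall r, validstack N r -> pole (zeta G U phi k) r.

Lemma eta_realizes : realizes N (eta G U phi k) (forallN (fun n => F (iota n) (app f (iota n)))).
Proof.
  intros pi Hpi [n [pi' [-> HFn]]].
  change (in_pole (eta G U phi k, num n :: pi')).
  eapply in_pole_exec_back; [apply exec_eta|].
  eapply in_pole_exec_back; [apply rt_step, s_big|].
  inversion Hpi as [|? ? _ Hpi']; subst.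
  unfold eta_entry; destruct (n <? k) eqn:Hnk.
  - apply Nat.ltb_lt in Hnk.
    eapply in_pole_exec_back; [solve_run 9|].
    apply (in_pole_exec (phi ⋅ num n, pi')); [|apply rt_step; constructor].
    apply (phi_realizes n Hnk); auto.
  - eapply in_pole_exec_back; [apply exec_num0 | apply zeta_realizes_bot, Hpi'].
Qed.

Lemma Psi_realizes_bot_of_successor : valid N G -> valid N U -> valid N phi ->
  realizes N U (forallV (fun f => neg N (forallN (fun n => F (iota n) (app f (iota n)))))) ->
  realizes N (Psi ⋅ G ⋅ U ⋅ (sigma ⋅ num k) ⋅ (chi ⋅ num k ⋅ phi ⋅ zeta G U phi k)) (bot N) ->
  realizes N (Psi ⋅ G ⋅ U ⋅ num k ⋅ phi) (bot N).
Proof.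
  intros HGv HUv Hphiv HU Hsucc pi Hpi _.
  apply (in_pole_exec_back (_, pi) _ (exec_Psi G U (num k) phi pi)).
  apply (in_pole_arg_k N G U phi k zeta_realizes_bot pi Hpi HUv (valid_arg_k N G U phi k HGv HUv Hphiv)).
  - apply (in_pole_exec (_, pi) _ (Hsucc pi Hpi Hpi)), exec_Psi.
  - apply (HU (eta G U phi k :: pi)); [constructor; auto using valid_eta|].
    exists f, (eta G U phi k), pi.
    split; [reflexivity | split; [apply valid_eta; auto | split; [apply eta_realizes | exact Hpi]]].
Qed.

End RealizersFromPsi.

Lemma realizer_of_refuted_zeta N (V : Type) (F : V -> V -> stack -> Prop) (n : V) G U phi k r :
  valid N G -> valid N U -> valid N phi ->
  realizes N G (forallV (fun n => neg N (forallV (fun x => neg N (F n x))))) ->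
  validstack N r -> ~ pole (zeta G U phi k) r ->
  exists x z, valid N z /\ realizes N z (F n x) /\
    ~ realizes N (Psi ⋅ G ⋅ U ⋅ (sigma ⋅ num k) ⋅ (chi ⋅ num k ⋅ phi ⋅ z)) (bot N).
Proof.
  intros HGv HUv Hphiv HG Hr Hz.
  set (L := G_cont (H_unfolded G U 0 0) (num k) phi).
  assert (HLv : valid N L).
  { unfold L, G_cont; simpl.
    pose proof (valid_H_unfolded N G U HGv HUv 0 0); pose proof (valid_num N k); tauto. }
  assert (HL : ~ realizes N L (forallV (fun x => neg N (F n x)))).
  { intros HL; apply Hz.
    apply (in_pole_exec_back (_, r) (G, L :: r)); [apply exec_G_call|].
    apply HG; [constructor; auto|].
    exists n, L, r; split; [reflexivity | split; [exact HLv | split; [exact HL | exact Hr]]]. }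
  apply not_all_ex_not in HL as [pi HL].
  apply imply_to_and in HL as [Hpi HL]; apply imply_to_and in HL as [[x Hx] HL].
  destruct Hx as [z [pi1 [-> [Hzv [Hz' Hpi1]]]]].
  exists x, z; split; [exact Hzv | split; [exact Hz'|]].
  intros Hsucc; apply HL, (pole_G_cont G U (num k) k); [apply numeral_like_num | apply Hsucc; auto].
Qed.

Theorem lemma5 (N : nat)
  (* ground model of ZF: sets V, the integers, and f[n] = app(f,n) *)
  (V : Type) (iota : nat -> V) (app : V -> V -> V)
  (Hgm : forall (k : nat) (a : nat -> V),
      exists f : V, forall i, i < k -> app f (iota i) = a i)
  (* the formula F[n,x] (with parameters), via its falsity values ||F[n,x]|| *)
  (F : V -> V -> stack -> Prop)
  (G U : term) (HGv : valid N G) (HUv : valid N U)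
  (HG : realizes N G
          (forallV (fun n => neg N (forallV (fun x => neg N (F n x))))))
  (HU : realizes N U
          (forallV (fun f => neg N (forallN (fun n => F (iota n) (app f (iota n)))))))
  (k : nat) (phi : term) (Hphiv : valid N phi)
  (Hphi : forall i, i < k -> exists a_i : V, realizes N (tapp phi (num i)) (F (iota i) a_i)) :
  ~ realizes N (tapp (tapp (tapp (tapp Psi G) U) (num k)) phi) (bot N) ->
  exists (a_k : V) (zeta : term),
    valid N zeta /\ realizes N zeta (F (iota k) a_k) /\
    ~ realizes N
        (tapp (tapp (tapp (tapp Psi G) U) (tapp sigma (num k)))
              (tapp (tapp (tapp chi (num k)) phi) zeta))
        (bot N).
Proof.
  intros Hnot_bot.
  destruct (classic (forall r, validstack N r -> pole (zeta G U phi k) r)) as [Hbot|Hbot].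
  - exists (iota k), (zeta G U phi k); split; [apply valid_zeta; auto|].
    split; [intros pi Hpi _; apply Hbot, Hpi|].
    destruct (finite_choice (iota 0) (fun i a => realizes N (phi ⋅ num i) (F (iota i) a)) k Hphi)
      as [a Ha].
    destruct (Hgm k a) as [f Hf].
    intros Hsucc; apply Hnot_bot.
    apply (Psi_realizes_bot_of_successor N V iota app F G U phi k f); auto.
    intros i Hi; rewrite Hf; auto.
  - apply not_all_ex_not in Hbot as [r Hr]; apply imply_to_and in Hr as [Hr Hz].
    apply (realizer_of_refuted_zeta N V F (iota k) G U phi k r); auto.
Qed.
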